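(* Let $k\ge 3$ and $1\le t\le k-1$ be integers. Then there exists a $t$-intersecting family $\mathcal{F}\subset\binom{[2k-t+1]}{k}$ such that $$\bigcup_{j=0}^{k-t}\binom{[2k-2t+2]}{j}\subset\mathcal{D}(\mathcal{F}).$$
   Context: $[m]=\{1,\dots,m\}$; $\binom{S}{j}$ is the family of all $j$-element subsets of $S$. For a family $\mathcal{F}$ of sets, $\mathcal{D}(\mathcal{F})=\{F\setminus F' : F,F'\in\mathcal{F}\}$. A family $\mathcal{F}$ is $t$-intersecting if $|F\cap F'|\ge t$ for all $F,F'\in\mathcal{F}$. *)

From mathcomp Require Import all_boot.
Set Implicit Arguments. Unset Strict Implicit. Unset Printing Implicit Defensive.

(* Ground set [m] = {1,...,m} is modelled by 'I_m = {0,...,m-1} (shift by one). *)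

Definition diff_family (T : finType) (F : {set {set T}}) : {set {set T}} :=
  [set A :\: B | A in F, B in F].

Definition t_intersecting (T : finType) (t : nat) (F : {set {set T}}) : Prop :=
  forall A B, A \in F -> B \in F -> t <= #|A :&: B|.

Definition initseg (n l : nat) : {set 'I_n} := [set i : 'I_n | i < l].

From mathcomp Require Import all_boot zify.
Set Implicit Arguments. Unset Strict Implicit. Unset Printing Implicit Defensive.

(* For t >= 2 take all k-subsets of [2k - t]: two of them meet in at least t
   points, and a set B of size at most k - t is A \ A' for a k-set A containing B
   and a k-set A' that contains A \ B and avoids B.

   For t = 1 the ground set has 2k points, and a family containing exactly one of
   A, ~A for every k-set A is intersecting, since disjoint k-sets are
   complementary.  Such a family is a colouring of the k-sets with
   col (~A) = ~~ col A, and A :&: C = A \ ~C, so B lies in D(F) as soon as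
   B = A :&: C with col A and ~~ col C.  This is achieved for every B with
   |B| <= k - 1 provided every (k-1)-set has two one-point extensions of
   different colours.  For odd k the parity of |A :&: X|, |X| = k, is such a
   colouring; for even k a parity on a (k-1)-set is corrected near the sets
   where it fails. *)

Section Subsets.
Variable T : finType.
Implicit Types A B C K V W : {set T}.

Lemma exists_subset_card A m : m <= #|A| -> exists2 S : {set T}, S \subset A & #|S| = m.
Proof.
case/card_geqP=> s [uniq_s size_s sub_s]; exists [set x in s].
  by apply/subsetP=> x; rewrite inE; apply: sub_s.
by rewrite cardsE (card_uniqP uniq_s).
Qed.

Lemma cardsU_disjoint A B : [disjoint A & B] -> #|A :|: B| = #|A| + #|B|.
Proof. by move=> disjAB; apply/eqP; rewrite (leq_card_setU A B).2. Qed.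

Lemma exists_subset_between A C m : A \subset C -> #|A| <= m <= #|C| ->
  exists S : {set T}, [/\ A \subset S, S \subset C & #|S| = m].
Proof.
move=> sAC /andP[leAm lemC].
have [S sS cardS] : exists2 S : {set T}, S \subset C :\: A & #|S| = m - #|A|.
  by apply: exists_subset_card; rewrite cardsD (setIidPr sAC) leq_sub2r.
have disjAS : [disjoint A & S].
  by rewrite -setI_eq0 -subset0; apply/subsetP=> x /setIP[xA /(subsetP sS)]; rewrite inE xA.
exists (A :|: S); split; first exact: subsetUl.
  by rewrite subUset sAC (subset_trans sS (subsetDl _ _)).
by rewrite cardsU_disjoint // cardS subnKC.
Qed.

Lemma setI_sandwich B K V W :
  B \subset K -> K \subset B :|: ~: W -> B \subset V -> V \subset W -> K :&: V = B.
Proof.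
move=> sBK sKBW sBV sVW; apply/eqP; rewrite eqEsubset [B \subset _]subsetI sBK sBV !andbT.
apply/subsetP=> x /setIP[/(subsetP sKBW)]; rewrite !inE => /orP[//|xW] /(subsetP sVW).
by rewrite (negbTE xW).
Qed.

Lemma cardsCI A X : #|~: A :&: X| = #|X| - #|A :&: X|.
Proof. by rewrite setIC -setDE cardsD setIC. Qed.

Lemma cardsU1I x A X : x \notin A -> #|(x |: A) :&: X| = (x \in X) + #|A :&: X|.
Proof.
move=> xA; rewrite setIUl; case: (boolP (x \in X)) => xX.
  by rewrite (setIidPl _) ?sub1set // cardsU1 inE (negbTE xA).
rewrite (_ : [set x] :&: X = set0) ?set0U //.
by apply/setP=> y; rewrite !inE; have [->|] := eqVneq y x; rewrite ?(negbTE xX).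
Qed.

Lemma exists_fresh_in A X : #|A :&: X| < #|X| -> exists2 x, x \in X & x \notin A.
Proof.
rewrite -subn_gt0 -cardsCI => /card_gt0P[x]; rewrite !inE => /andP[xA xX].
by exists x.
Qed.

End Subsets.

Section Families.
Variable T : finType.
Implicit Types (A B Y : {set T}) (F : {set {set T}}).

Lemma mem_diff_family F A B : A \in F -> B \in F -> A :\: B \in diff_family F.
Proof. exact: imset2_f. Qed.

Definition ksubsets Y (k : nat) : {set {set T}} := [set A : {set T} | (A \subset Y) && (#|A| == k)].

Lemma ksubsetsP Y k A : reflect (A \subset Y /\ #|A| = k) (A \in ksubsets Y k).
Proof. by rewrite inE; apply: (iffP andP) => -[-> /eqP]. Qed.

Lemma ksubsets_intersecting Y k : t_intersecting (k.*2 - #|Y|) (ksubsets Y k).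
Proof.
move=> A B /ksubsetsP[sAY cardA] /ksubsetsP[sBY cardB].
have : #|A :|: B| <= #|Y| by apply: subset_leq_card; rewrite subUset sAY.
by have := cardsUI A B; lia.
Qed.

Lemma ksubsets_diff Y k B : B \subset Y -> #|B| <= k -> k + #|B| <= #|Y| ->
  B \in diff_family (ksubsets Y k).
Proof.
move=> sBY leBk leBY.
have [A [sBA sAY cardA]] : exists A, [/\ B \subset A, A \subset Y & #|A| = k].
  by apply: exists_subset_between => //; apply/andP; lia.
have [A' [sDA' sA'Y cardA']] : exists A', [/\ A :\: B \subset A', A' \subset Y :\: B & #|A'| = k].
  apply: exists_subset_between; first exact: setSD.
  by rewrite cardsD (setIidPr sBA) cardsD (setIidPr sBY) cardA; apply/andP; lia.
have -> : B = A :\: A'.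
  rewrite setDE; apply/esym/(setI_sandwich (W := ~: (A :\: B))) => //; last by rewrite setCS.
  - by rewrite setCK; apply/subsetP=> x xA; rewrite !inE xA andbT orbN.
  - by rewrite subsetC; apply: subset_trans sA'Y _; rewrite setDE subsetIr.
by apply: mem_diff_family; apply/ksubsetsP; split=> //; apply: subset_trans sA'Y (subsetDl _ _).
Qed.

End Families.

Section AntipodalColouring.
Variables (T : finType) (k : nat) (col : {set T} -> bool).
Hypothesis cardT : #|T| = k.*2.
Hypothesis col_setC : forall A : {set T}, #|A| = k -> col (~: A) = ~~ col A.
Implicit Types A B C K W : {set T}.

Definition coloured : {set {set T}} := [set A : {set T} | (#|A| == k) && col A].

Lemma colouredP A : reflect (#|A| = k /\ col A) (A \in coloured).
Proof. by rewrite inE; apply: (iffP andP) => -[/eqP]. Qed.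

Lemma card_setC_half A : #|~: A| = k.*2 - #|A|.
Proof. by rewrite cardsCs setCK cardT. Qed.

Lemma coloured_intersecting : t_intersecting 1 coloured.
Proof.
move=> A B /colouredP[cardA colA] /colouredP[cardB colB]; rewrite lt0n cards_eq0.
apply: contraTneq colB => disjAB.
have sBA : B \subset ~: A.
  apply/subsetP=> x xB; rewrite inE; apply/negP=> xA.
  by have := in_set0 x; rewrite -disjAB inE xA xB.
have -> : B = ~: A by apply/eqP; rewrite eqEcard sBA card_setC_half cardA cardB; lia.
by rewrite col_setC // colA.
Qed.

Lemma setI_diff_coloured A C : #|A| = k -> #|C| = k -> col A -> ~~ col C ->
  A :&: C \in diff_family coloured.
Proof.
move=> cardA cardC colA colC; rewrite -[C]setCK -setDE.
apply: mem_diff_family; apply/colouredP; split=> //.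
- by rewrite card_setC_half cardC; lia.
- by rewrite col_setC.
Qed.

Hypothesis col_split : forall B, #|B| = k.-1 ->
  exists x y, [/\ x \notin B, y \notin B, col (x |: B) & ~~ col (y |: B)].

Lemma coloured_diff B : #|B| <= k.-1 -> B \in diff_family coloured.
Proof.
move=> leBk; have [->|/set0Pn[b bB]] := eqVneq B set0.
  have [A _ cardA] : exists2 A : {set T}, A \subset setT & #|A| = k.
    by apply: exists_subset_card; rewrite cardsT cardT; lia.
  have cardAC : #|~: A| = k by rewrite card_setC_half; lia.
  have colAC := col_setC cardA; rewrite -(setICr A).
  case: (boolP (col A)) => colA; first by apply: setI_diff_coloured; rewrite ?colAC ?colA.
  by rewrite setIC; apply: setI_diff_coloured; rewrite ?colAC.
have cardB : 0 < #|B| by apply/card_gt0P; exists b.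
have [B' [sBB' _ cardB']] : exists B', [/\ B \subset B', B' \subset setT & #|B'| = k.-1].
  by apply: exists_subset_between => //; rewrite leBk cardsT cardT; lia.
have [x [y [xB' yB' colx coly]]] := col_split cardB'.
have xy : x != y by apply: contraNneq coly => <-.
(* K is B padded with points outside W, so it meets both x |: B' and y |: B' in B. *)
set W := x |: (y |: B').
have sB'W : B' \subset W by apply: subset_trans (subsetU1 y B') (subsetU1 _ _).
have cardW : #|W| = k.+1 by rewrite !cardsU1 in_setU1 negb_or xy xB' yB' cardB'; lia.
have [K [sBK sKBW cardK]] : exists K, [/\ B \subset K, K \subset B :|: ~: W & #|K| = k].
  apply: exists_subset_between; first exact: subsetUl.
  have disjBW : [disjoint B & ~: W].
    by rewrite -setI_eq0 -setDE setD_eq0 (subset_trans sBB').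
  by rewrite cardsU_disjoint // card_setC_half cardW; apply/andP; lia.
have KV z : z \in W -> z \notin B' -> K :&: (z |: B') = B.
  move=> zW zB'; apply: (setI_sandwich sBK sKBW); first exact: subset_trans sBB' (subsetU1 _ _).
  by rewrite subUset sub1set zW.
have cardzB' z : z \notin B' -> #|z |: B'| = k by move=> zB'; rewrite cardsU1 zB' cardB'; lia.
case: (boolP (col K)) => colK.
  by rewrite -(KV y) ?inE ?eqxx ?orbT //; apply: setI_diff_coloured; rewrite ?cardzB'.
by rewrite -(KV x) ?setU11 // setIC; apply: setI_diff_coloured; rewrite ?cardzB'.
Qed.

End AntipodalColouring.

Section ParityColouring.
Variables (T : finType) (k : nat) (X : {set T}).
Hypotheses (odd_k : odd k) (cardX : #|X| = k) (cardT : #|T| = k.*2).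

Lemma parity_setC (A : {set T}) : odd #|~: A :&: X| = ~~ odd #|A :&: X|.
Proof.
have leAX : #|A :&: X| <= k by rewrite -cardX subset_leq_card ?subsetIr.
by rewrite cardsCI cardX oddB // odd_k.
Qed.

Lemma parity_split (B : {set T}) : #|B| = k.-1 ->
  exists x y, [/\ x \notin B, y \notin B, odd #|(x |: B) :&: X| & ~~ odd #|(y |: B) :&: X|].
Proof.
move=> cardB; have leBk (Y : {set T}) : #|B :&: Y| <= #|B| by rewrite subset_leq_card ?subsetIl.
have [x xX xB] : exists2 x, x \in X & x \notin B.
  by apply: exists_fresh_in; rewrite cardX (leq_ltn_trans (leBk X)) // cardB; case: k odd_k.
have [y yX yB] : exists2 y, y \in ~: X & y \notin B.
  have cardXC : #|~: X| = k by rewrite cardsCs setCK cardT cardX; lia.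
  by apply: exists_fresh_in; rewrite cardXC (leq_ltn_trans (leBk _)) // cardB; case: k odd_k.
rewrite inE in yX; have cx := cardsU1I X xB; have cy := cardsU1I X yB.
rewrite xX in cx; rewrite (negbTE yX) in cy.
by case: (boolP (odd #|B :&: X|)) => oddB; [exists y, x | exists x, y]; rewrite cx cy /= oddB.
Qed.

End ParityColouring.

(* The arguments count the points of A in the classes {0}, {1}, {2,3} and {4..k+1}
   of 'I_(2k) (see even_class below).  odd (e + i) is the parity of A on a (k-1)-set
   X; it is antipodal since k - 1 is odd, and splits every (k-1)-set except X
   itself.  The corrections repair that defect and are exchanged by the antipode,
   which maps g to 2 - g. *)
Definition even_colour (k e f g i : nat) : bool :=
  if g == 1 then odd (e + i)
  else if g == 2 then
    if [&& e == 0, f == 0 & i == k - 2] then true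
    else if [&& e == 1, f == 0 & i == 0] then false
    else odd (e + i) (+) ((e == 0) && (f == 1))
  else
    if [&& e == 1, f == 1 & i == 0] then false
    else if [&& e == 0, f == 1 & i == k - 2] then true
    else odd (e + i) (+) ((e == 1) && (f == 0)).

Lemma even_colour_antipodal k e f g i : ~~ odd k -> 3 <= k ->
  e <= 1 -> f <= 1 -> g <= 2 -> i <= k - 2 ->
  even_colour k (1 - e) (1 - f) (2 - g) (k - 2 - i) = ~~ even_colour k e f g i.
Proof.
move=> even_k k3 le_e le_f le_g le_i.
have flip0 : (k - 2 - i == 0) = (i == k - 2) by apply/eqP/eqP; lia.
have flip2 : (k - 2 - i == k - 2) = (i == 0) by apply/eqP/eqP; lia.
have not_both : (i == 0) && (i == k - 2) = false by apply/negP => /andP[/eqP ? /eqP ?]; lia.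
have odd_flip : odd (k - 2 - i) = odd i by rewrite -subnDA oddB ?oddD /=; [case: odd even_k | lia].
rewrite /even_colour.
move: le_e le_f le_g; case: e => [|[|//]] _; case: f => [|[|//]] _;
  case: g => [|[|[|//]]] _ /=; rewrite ?flip0 ?flip2 ?add0n ?add1n ?oddS ?odd_flip /=.
all: by case: (i == 0) not_both; case: (i == k - 2) => //= _; case: (odd i).
Qed.

Definition class_size k c := nth 0 [:: 1; 1; 2; k - 2; k - 2] c.

Definition even_colour_bump k e f g i c :=
  even_colour k ((c == 0) + e) ((c == 1) + f) ((c == 2) + g) ((c == 3) + i).

Ltac split_by c1 c2 :=
  exists c1, c2; rewrite /class_size /even_colour_bump /even_colour negb_eqb /=;
  split; [lia | lia |];
  repeat (case: eqP => ?; try (exfalso; lia)); try subst;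
  rewrite ?addn0 ?add0n ?addn1 ?oddD ?oddS;
  repeat match goal with H : odd ?x = _ |- context [odd ?x] => rewrite H end;
  rewrite /=; try done; match goal with |- context [odd ?x] => by case: (odd x) end.

Lemma even_colour_split k e f g i j : ~~ odd k -> 3 <= k ->
  e <= 1 -> f <= 1 -> g <= 2 -> i <= k - 2 -> j <= k - 2 -> e + f + g + i + j = k.-1 ->
  exists c1 c2, [/\ nth 0 [:: e; f; g; i; j] c1 < class_size k c1,
                    nth 0 [:: e; f; g; i; j] c2 < class_size k c2 &
                    even_colour_bump k e f g i c1 != even_colour_bump k e f g i c2].
Proof.
move=> even_k k3 le_e le_f le_g le_i le_j sum_k.
have k_neq3 : k != 3 by apply: contraNneq even_k => ->.
have k4 : 4 <= k by lia.
have odd_k2 : odd (k - 2) = false by rewrite oddB ?(negbTE even_k) //; lia.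
have odd_k3 : odd (k - 3) = true by rewrite oddB ?(negbTE even_k) //; lia.
move: le_e le_f le_g sum_k; case: e => [|[|//]] _; case: f => [|[|//]] _;
  case: g => [|[|[|//]]] _ sum_k.
- have [?|?] : i < k - 2 \/ i = k - 2 by lia.
  + split_by 3 2.
  + split_by 1 2.
- split_by 0 1.
- have [?|?] : i < k - 3 \/ i = k - 3 by lia.
  + split_by 3 4.
  + split_by 0 4.
- have [?|?] : i = 0 \/ 0 < i by lia.
  + split_by 3 2.
  + split_by 0 2.
- split_by 0 4.
- split_by 3 4.
- have [?|?] : 0 < i \/ i = 0 by lia.
  + split_by 4 2.
  + split_by 1 2.
- split_by 3 1.
- have [?|?] : 0 < i \/ i = 0 by lia.
  + split_by 3 4.
  + split_by 3 1.
- split_by 3 2.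
- split_by 3 4.
- split_by 3 4.
Qed.

Lemma card_fibers (T : finType) (pt : T -> nat) N (A : {set T}) : (forall x, pt x < N) ->
  #|A| = \sum_(c < N) #|A :&: [set x | pt x == c]|.
Proof.
move=> ptN; rewrite -sum1_card (partition_big (fun x => Ordinal (ptN x)) predT) //=.
apply: eq_bigr => c _; rewrite -sum1_card; apply: eq_bigl => x.
by rewrite !inE -val_eqE.
Qed.

Lemma card_ord_itv n a b : a <= b <= n -> #|[set x : 'I_n | a <= x < b]| = b - a.
Proof.
elim: b => [|b IH] /andP[le_ab le_bn].
  by apply/eqP; rewrite cards_eq0; apply/eqP/setP=> x; rewrite !inE ltn0 andbF.
have [->|lt_ab] := eqVneq a b.+1.
  by apply/eqP; rewrite subnn cards_eq0; apply/eqP/setP=> x; rewrite !inE; lia.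
have -> : [set x : 'I_n | a <= x < b.+1] = Ordinal le_bn |: [set x : 'I_n | a <= x < b].
  by apply/setP=> x; rewrite !inE -val_eqE /=; lia.
by rewrite cardsU1 inE /= ltnn andbF IH; lia.
Qed.

Definition even_class k (x : nat) : nat :=
  if x < 1 then 0 else if x < 2 then 1 else if x < 4 then 2 else if x < k.+2 then 3 else 4.

Definition class_bound k c := nth 0 [:: 0; 1; 2; 4; k.+2; k.*2] c.

Lemma even_class_lt5 k x : even_class k x < 5.
Proof. by rewrite /even_class; do 4?case: ifP. Qed.

Lemma even_classE k x c : 4 <= k -> x < k.*2 -> c < 5 ->
  (even_class k x == c) = (class_bound k c <= x < class_bound k c.+1).
Proof.
rewrite /even_class /class_bound => k4 xk.
by case: c => [|[|[|[|[|//]]]]] _ /=; do 4?case: ifP; lia.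
Qed.

Section EvenColouring.
Variables (n k : nat).
Hypotheses (cardT : n = k.*2) (even_k : ~~ odd k) (k3 : 3 <= k).

Let k4 : 4 <= k.
Proof.
have : k != 3 by apply: contraNneq even_k => ->.
lia.
Qed.

Definition class_count c (A : {set 'I_n}) := #|A :&: [set x : 'I_n | even_class k x == c]|.

Definition even_set_colour (A : {set 'I_n}) :=
  even_colour k (class_count 0 A) (class_count 1 A) (class_count 2 A) (class_count 3 A).

Lemma card_even_class c : c < 5 -> #|[set x : 'I_n | even_class k x == c]| = class_size k c.
Proof.
move=> c5; transitivity #|[set x : 'I_n | class_bound k c <= x < class_bound k c.+1]|.
  by apply: eq_card => x; rewrite !inE even_classE // -cardT.
rewrite card_ord_itv /class_bound /class_size; last by case: c c5 => [|[|[|[|[|]]]]] /=; lia.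
by case: c c5 => [|[|[|[|[|]]]]] /=; lia.
Qed.

Lemma class_count_le c (A : {set 'I_n}) : c < 5 -> class_count c A <= class_size k c.
Proof. by move=> c5; rewrite -card_even_class // subset_leq_card ?subsetIr. Qed.

Lemma even_set_colour_setC (A : {set 'I_n}) : even_set_colour (~: A) = ~~ even_set_colour A.
Proof.
rewrite /even_set_colour {1 2 3 4}/class_count !cardsCI !card_even_class //.
by apply: even_colour_antipodal => //; apply: class_count_le.
Qed.

Lemma even_set_colour_U1 (x : 'I_n) c (B : {set 'I_n}) : x \notin B -> even_class k x = c ->
  even_set_colour (x |: B) =
  even_colour_bump k (class_count 0 B) (class_count 1 B) (class_count 2 B) (class_count 3 B) c.
Proof. by move=> xB xc; rewrite /even_set_colour /class_count !cardsU1I // !inE xc. Qed.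

Lemma even_set_colour_split (B : {set 'I_n}) : #|B| = k.-1 ->
  exists x y, [/\ x \notin B, y \notin B, even_set_colour (x |: B) & ~~ even_set_colour (y |: B)].
Proof.
move=> cardB; set counts := [:: class_count 0 B; class_count 1 B; class_count 2 B;
                               class_count 3 B; class_count 4 B].
have fresh c : nth 0 counts c < class_size k c -> exists2 x : 'I_n, even_class k x = c & x \notin B.
  have [c5 room|c5] := ltnP c 5; last by rewrite /class_size !nth_default.
  have /exists_fresh_in[x] : class_count c B < #|[set x : 'I_n | even_class k x == c]|.
    by rewrite card_even_class //; move: room; case: c c5 => [|[|[|[|[|]]]]].
  by rewrite inE => /eqP; exists x.
have sumB := card_fibers B (even_class_lt5 k).
rewrite !big_ord_recr big_ord0 /= add0n cardB in sumB.
have le_count c : c < 5 -> class_count c B <= class_size k c := @class_count_le c B.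
have [c1 [c2 [/fresh[x xc1 xB] /fresh[y yc2 yB] colours]]] := even_colour_split even_k k3
  (le_count 0 erefl) (le_count 1 erefl) (le_count 2 erefl) (le_count 3 erefl) (le_count 4 erefl)
  (esym sumB).
rewrite -(even_set_colour_U1 xB xc1) -(even_set_colour_U1 yB yc2) in colours.
case colx: (even_set_colour (x |: B)) colours; case coly: (even_set_colour (y |: B)) => // _.
  by exists x, y; rewrite colx coly.
by exists y, x; rewrite colx coly.
Qed.

End EvenColouring.

Lemma intersecting_half_family n k : 3 <= k -> n = k.*2 ->
  exists F : {set {set 'I_n}},
    [/\ forall A, A \in F -> #|A| = k, t_intersecting 1 F &
        forall B : {set 'I_n}, #|B| <= k.-1 -> B \in diff_family F].
Proof.
move=> k3 nk; have cardT : #|'I_n| = k.*2 by rewrite card_ord.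
suff [col col_setC col_split] : exists2 col : {set 'I_n} -> bool,
    forall A : {set 'I_n}, #|A| = k -> col (~: A) = ~~ col A &
    forall B : {set 'I_n}, #|B| = k.-1 ->
      exists x y, [/\ x \notin B, y \notin B, col (x |: B) & ~~ col (y |: B)].
  exists (coloured k col); split; first by move=> A /colouredP[].
    exact: coloured_intersecting.
  exact: coloured_diff.
have [odd_k|even_k] := boolP (odd k).
  have [X _ cardX] : exists2 X : {set 'I_n}, X \subset setT & #|X| = k.
    by apply: exists_subset_card; rewrite cardsT cardT; lia.
  exists (fun A : {set 'I_n} => odd #|A :&: X|).
    by move=> A _; exact: parity_setC odd_k cardX A.
  exact: parity_split odd_k cardX cardT.
exists (@even_set_colour n k); first by move=> A _; apply: even_set_colour_setC.
exact: even_set_colour_split.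
Qed.

Theorem corollary1 (k t : nat) :
  3 <= k -> 1 <= t -> t <= k - 1 ->
  exists F : {set {set 'I_(2 * k - t + 1)}},
    (forall A, A \in F -> #|A| = k) /\
    t_intersecting t F /\
    (forall B : {set 'I_(2 * k - t + 1)},
       B \subset initseg (2 * k - t + 1) (2 * k - 2 * t + 2) ->
       #|B| <= k - t ->
       B \in diff_family F).
Proof.
move=> k3 t1 tk; have [t_eq1|t2] : t = 1 \/ 2 <= t by lia.
  subst t; have [|F [uniF intF diffF]] := @intersecting_half_family (2 * k - 1 + 1) k k3.
    lia.
  by exists F; split=> //; split=> // B _ cardB; apply: diffF; lia.
set n := 2 * k - t + 1; set Y := [set x : 'I_n | 0 <= x < 2 * k - t].
have cardY : #|Y| = 2 * k - t by rewrite card_ord_itv ?subn0 //= /n; lia.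
exists (ksubsets Y k); split; first by move=> A /ksubsetsP[].
split; first by have := @ksubsets_intersecting _ Y k; rewrite cardY (_ : k.*2 - _ = t) //; lia.
move=> B sB cardB; apply: ksubsets_diff; rewrite ?cardY; try lia.
by apply: subset_trans sB _; apply/subsetP=> x; rewrite !inE; lia.
Qed.
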